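(* Let $W,V$ be subspaces of $\mathbb{R}^n$ with $\mathbb{R}^n=W\oplus V^\perp$, and let $\mu$ and $\nu$ be probabilistic frames for $W$ and $V$, respectively. (1) If $\nu$ is an oblique $\epsilon$-approximately dual probabilistic frame of $\mu$ on $V$, then $\mu$ and $\nu$ perform probabilistic $\sqrt B\,\epsilon$-consistent reconstruction, where $B>0$ is an upper frame bound for $\nu$. (2) Conversely, if $\mu$ and $\nu$ perform probabilistic $\alpha$-consistent reconstruction, then $\nu$ is an oblique $\epsilon$-approximately dual probabilistic frame of $\mu$ on $V$, where $\epsilon=\alpha\sqrt{M_2\big((\boldsymbol{\pi}_{WV^\perp}\mathbf{S}_\nu^\dagger)_\#\nu\big)}$.
   Context: $\mathcal{P}_2(S)$ denotes Borel probability measures on $\mathbb{R}^n$ concentrated on the subspace $S$ with finite second moment $M_2(\eta)=\int\|\mathbf{x}\|^2d\eta(\mathbf{x})$. $\mu\in\mathcal{P}_2(W)$ is a probabilistic frame for $W$ with bounds $0<A\le B$ if $A\|\mathbf{x}\|^2\le\int_W|\langle\mathbf{x},\mathbf{y}\rangle|^2d\mu(\mathbf{y})\le B\|\mathbf{x}\|^2$ for all $\mathbf{x}\in W$. The frame operator of $\nu$ is $\mathbf{S}_\nu=\int\mathbf{y}\mathbf{y}^td\nu(\mathbf{y})$ with Moore–Penrose inverse $\mathbf{S}_\nu^\dagger$. $\Gamma(\mu,\nu)$ is the set of Borel probability measures on $W\times V$ with marginals $\mu,\nu$. $\boldsymbol{\pi}_{WV^\perp}$ is the oblique projection onto $W$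 along $V^\perp$. For $\epsilon\ge0$, $\nu$ is an oblique $\epsilon$-approximately dual probabilistic frame of $\mu$ on $V$ if there is $\gamma\in\Gamma(\mu,\nu)$ with $\left\|\int_{W\times V}\mathbf{x}\mathbf{y}^td\gamma(\mathbf{x},\mathbf{y})-\boldsymbol{\pi}_{WV^\perp}\right\|\le\epsilon$ (operator norm induced by the Euclidean norm). For $\epsilon\ge0$, $\mu$ and $\nu$ perform probabilistic $\epsilon$-consistent reconstruction if there is $\gamma\in\Gamma(\mu,\nu)$ such that for every $\mathbf{f}\in\mathbb{R}^n$, $\left(\int_V|\langle\mathbf{f}-\hat{\mathbf{f}},\mathbf{z}\rangle|^2d\nu(\mathbf{z})\right)^{1/2}\le\epsilon\|\mathbf{f}\|$, where $\hat{\mathbf{f}}=\int_{W\times V}\mathbf{x}\langle\mathbf{y},\mathbf{f}\rangle\,d\gamma(\mathbf{x},\mathbf{y})$. *)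

From HB Require Import structures.
From mathcomp Require Import all_boot all_order all_algebra.
From mathcomp Require Import all_classical all_reals all_analysis.
Set Implicit Arguments. Unset Strict Implicit. Unset Printing Implicit Defensive.
Import Order.TTheory GRing.Theory Num.Theory numFieldNormedType.Exports.
Local Open Scope ring_scope.
Local Open Scope classical_set_scope.

(* Points of R^n are row vectors 'rV[R]_n; [Rn R n] is the same type equipped
   with the Borel sigma-algebra (generated by the open sets of R^n). *)
Definition Rn (R : realType) (n : nat) := g_sigma_algebraType (@open 'rV[R]_n).

Section Defs.
Variables (R : realType) (n : nat).
Local Notation vec := 'rV[R]_n.

Definition dot (x y : vec) : R := (x *m y^T) 0 0.
Definition enorm (x : vec) : R := Num.sqrt (dot x x).

(* Subspaces of R^n are represented by (row spaces of) n x n matrices. *)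
Definition perp (V : 'M[R]_n) : 'M[R]_n := kermx V^T.

(* A matrix A : 'M_n acts on (column) vectors as x |-> A x; on row vectors
   this is x |-> x *m A^T. *)
Definition mxapply (A : 'M[R]_n) (x : vec) : vec := x *m A^T.

Definition opnorm (A : 'M[R]_n) : R :=
  sup [set enorm (mxapply A x) | x in [set x : vec | enorm x <= 1]].

(* Oblique projection onto W along V^perp (as a matrix acting on columns) *)
Definition oblique_proj (W V : 'M[R]_n) : 'M[R]_n := (proj_mx W (perp V))^T.

Definition is_MPinv (A X : 'M[R]_n) : Prop :=
  [/\ A *m X *m A = A, X *m A *m X = X, (A *m X)^T = A *m X & (X *m A)^T = X *m A].
Definition MPinv (A : 'M[R]_n) : 'M[R]_n := xget 0 [set X | is_MPinv A X].

Definition mxint d (T : measurableType d) (m : {measure set T -> \bar R})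
  p q (F : T -> 'M[R]_(p, q)) : 'M[R]_(p, q) :=
  \matrix_(i, j) Rintegral m setT (fun t => F t i j).

Definition M2 (eta : set (Rn R n) -> \bar R) : \bar R :=
  (\int[eta]_x ((enorm x) ^+ 2)%:E)%E.

Definition P2 (S : 'M[R]_n) (eta : probability (Rn R n) R) : Prop :=
  eta [set x : Rn R n | (x <= S)%MS] = 1%E /\ (M2 eta < +oo)%E.

Definition frame_bounds (S : 'M[R]_n) (eta : probability (Rn R n) R) (A B : R) :=
  [/\ P2 S eta, 0 < A, A <= B &
    forall x : vec, (x <= S)%MS ->
      ((A * enorm x ^+ 2)%:E <= \int[eta]_y ((dot x y) ^+ 2)%:E)%E /\
      (\int[eta]_y ((dot x y) ^+ 2)%:E <= (B * enorm x ^+ 2)%:E)%E].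

Definition prob_frame (S : 'M[R]_n) (eta : probability (Rn R n) R) :=
  exists A B, frame_bounds S eta A B.

Definition upper_frame_bound (S : 'M[R]_n) (eta : probability (Rn R n) R) (B : R) :=
  forall x : vec, (x <= S)%MS ->
    (\int[eta]_y ((dot x y) ^+ 2)%:E <= (B * enorm x ^+ 2)%:E)%E.

Definition frame_op (eta : probability (Rn R n) R) : 'M[R]_n :=
  mxint eta (fun y : Rn R n => (y : vec)^T *m (y : vec)).

Definition coupling (mu nu : probability (Rn R n) R)
    (g : probability (Rn R n * Rn R n)%type R) : Prop :=
  (forall A : set (Rn R n), measurable A -> g (fst @^-1` A) = mu A) /\
  (forall A : set (Rn R n), measurable A -> g (snd @^-1` A) = nu A).

Definition cross_op (g : probability (Rn R n * Rn R n)%type R) : 'M[R]_n :=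
  mxint g (fun p : Rn R n * Rn R n => (p.1 : vec)^T *m (p.2 : vec)).

Definition approx_dual (W V : 'M[R]_n) (mu nu : probability (Rn R n) R) (eps : R) :=
  0 <= eps /\
  exists g, coupling mu nu g /\ opnorm (cross_op g - oblique_proj W V) <= eps.

Definition recon (g : probability (Rn R n * Rn R n)%type R) (f : vec) : vec :=
  \row_i Rintegral g setT (fun p : Rn R n * Rn R n => (p.1 : vec) 0 i * dot p.2 f).

(* probabilistic eps-consistent reconstruction; the inequality
   (int |<f - fhat, z>|^2 dnu)^(1/2) <= eps |f| is stated squared (eps >= 0) *)
Definition consistent_recon (mu nu : probability (Rn R n) R) (eps : R) :=
  0 <= eps /\
  exists g, coupling mu nu g /\
    forall f : vec,
      (\int[nu]_z ((dot (f - recon g f) z) ^+ 2)%:E <= ((eps * enorm f) ^+ 2)%:E)%E.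

End Defs.

From HB Require Import structures.
From mathcomp Require Import all_boot all_order all_algebra.
From mathcomp Require Import all_classical all_reals all_analysis.
From mathcomp Require Import ring lra measurable_realfun.
Import Order.TTheory GRing.Theory Num.Theory numFieldNormedType.Exports.
Local Open Scope ring_scope.
Local Open Scope classical_set_scope.
Set Implicit Arguments. Unset Strict Implicit. Unset Printing Implicit Defensive.

(* Write P for the oblique projection onto W along V^perp (acting on rows),
   C for the cross operator of a coupling and S for the frame operator of nu.
   Then fhat = f C^T, and against every z in V (where nu lives) the error
   f - fhat pairs exactly like u = f (P - C^T), with |u| <= |C - P^T| |f|.
   (1) is the upper frame bound applied to the V-component of u.
   (2) u lies in W; the Moore-Penrose identities and the injectivity of S on V
   (lower frame bound) give u = u S (S^+)^T P, and testing this against u and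
   applying Cauchy-Schwarz in L^2(nu) gives
   |u|^2 <= M_2((P^T S^+)_# nu) * int <u, z>^2 dnu(z). *)

Lemma discriminant_le (R : realFieldType) (a b c : R) : 0 <= c ->
  (forall t, 0 <= a - 2 * t * b + t ^+ 2 * c) -> b ^+ 2 <= a * c.
Proof.
move=> c_ge0 quad_ge0; have [c0|c_neq0] := eqVneq c 0.
  have [->|b_neq0] := eqVneq b 0; first by rewrite c0 expr0n /= mulr0.
  have := quad_ge0 ((a + 1) / (2 * b)); rewrite c0 mulr0 addr0.
  by rewrite (_ : _ - _ = -1) ?oppr_ge0 ?ler10 //; field.
have c_gt0 : 0 < c by rewrite lt_def c_neq0.
have := quad_ge0 (b / c).
by rewrite (_ : _ + _ = a - b ^+ 2 / c) ?subr_ge0 ?ler_pdivrMr //; field.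
Qed.

Section Euclidean.
Variables (R : realType) (n : nat).
Local Notation vec := 'rV[R]_n.
Implicit Types (x y z u v w : vec) (A S V : 'M[R]_n).

Lemma dotE x y : dot x y = \sum_k x 0 k * y 0 k.
Proof. by rewrite /dot mxE; apply: eq_bigr => k _; rewrite mxE. Qed.

Lemma dotC x y : dot x y = dot y x.
Proof. by rewrite /dot -[x *m y^T]trmxK trmx_mul trmxK mxE. Qed.

Lemma dotDl x y z : dot (x + y) z = dot x z + dot y z.
Proof. by rewrite /dot mulmxDl mxE. Qed.

Lemma dotZl (c : R) x z : dot (c *: x) z = c * dot x z.
Proof. by rewrite /dot -scalemxAl mxE. Qed.

Lemma dotNl x z : dot (- x) z = - dot x z.
Proof. by rewrite -scaleN1r dotZl mulN1r. Qed.

Lemma dotBl x y z : dot (x - y) z = dot x z - dot y z.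
Proof. by rewrite dotDl dotNl. Qed.

Lemma dotDr x y z : dot z (x + y) = dot z x + dot z y.
Proof. by rewrite dotC dotDl !(dotC z). Qed.

Lemma dotZr (c : R) x z : dot z (c *: x) = c * dot z x.
Proof. by rewrite dotC dotZl dotC. Qed.

Lemma dotBr x y z : dot z (x - y) = dot z x - dot z y.
Proof. by rewrite dotC dotBl !(dotC z). Qed.

Lemma dot0l z : dot 0 z = 0.
Proof. by rewrite /dot mul0mx mxE. Qed.

Lemma dot_mulmx x y A : dot x (y *m A) = dot (x *m A^T) y.
Proof. by rewrite /dot trmx_mul mulmxA. Qed.

Lemma dot_delta i x : dot (delta_mx 0 i) x = x 0 i.
Proof.
rewrite dotE (bigD1 i) //= mxE !eqxx mul1r big1 ?addr0 // => j ji.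
by rewrite mxE (negbTE ji) andbF mul0r.
Qed.

Lemma dotxx_ge0 x : 0 <= dot x x.
Proof. by rewrite dotE sumr_ge0 // => k _; rewrite -expr2 sqr_ge0. Qed.

Lemma dotxx_eq0 x : dot x x = 0 -> x = 0.
Proof.
rewrite dotE => /eqP; rewrite psumr_eq0 => [/allP x0|k _]; last first.
  by rewrite -expr2 sqr_ge0.
apply/rowP => k; rewrite mxE.
by have := x0 k (mem_index_enum k); rewrite /= -expr2 sqrf_eq0 => /eqP.
Qed.

Lemma sqr_coord_le_dot x i : x 0 i ^+ 2 <= dot x x.
Proof.
by rewrite dotE (bigD1 i) //= -expr2 lerDl sumr_ge0 // => j _; rewrite -expr2 sqr_ge0.
Qed.

Lemma dotM_dotE v w x y :
  dot v x * dot w y = \sum_i \sum_j (v 0 i * w 0 j) * (x 0 i * y 0 j).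
Proof.
rewrite !dotE mulr_suml; apply: eq_bigr => i _.
by rewrite mulr_sumr; apply: eq_bigr => j _; ring.
Qed.

Lemma dot_inj x y : (forall w, dot x w = dot y w) -> x = y.
Proof.
move=> xy; apply/eqP; rewrite -subr_eq0; apply/eqP; apply: dotxx_eq0.
by rewrite dotBl xy subrr.
Qed.

Lemma sqr_enorm x : enorm x ^+ 2 = dot x x.
Proof. by rewrite sqr_sqrtr // dotxx_ge0. Qed.

Lemma enorm_ge0 x : 0 <= enorm x.
Proof. exact: sqrtr_ge0. Qed.

Lemma enormZ (c : R) x : enorm (c *: x) = `|c| * enorm x.
Proof. by rewrite /enorm dotZl dotZr mulrA -expr2 sqrtrM ?sqr_ge0 // sqrtr_sqr. Qed.

Lemma enormN x : enorm (- x) = enorm x.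
Proof. by rewrite -scaleN1r enormZ normrN1 mul1r. Qed.

Lemma sqr_dot_le x y : dot x y ^+ 2 <= dot x x * dot y y.
Proof.
apply: discriminant_le; first exact: dotxx_ge0.
move=> t; have := dotxx_ge0 (x - t *: y).
rewrite dotBl !dotBr !dotZl !dotZr (dotC y x).
by rewrite (_ : _ - _ = dot x x - 2 * t * dot x y + t ^+ 2 * dot y y) //; ring.
Qed.

Lemma dot_perp V v z : (v <= perp V)%MS -> (z <= V)%MS -> dot v z = 0.
Proof.
move=> /sub_kermxP vV /submxP [w ->].
by rewrite /dot trmx_mul mulmxA vV mul0mx mxE.
Qed.

Lemma capmx_perp V : (V :&: perp V)%MS = 0.
Proof.
apply/eqP; rewrite -submx0; apply/rV_subP => v; rewrite sub_capmx => /andP[vV vP].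
by rewrite (dotxx_eq0 (dot_perp vP vV)) sub0mx.
Qed.

Lemma sub_addmx_perp V u : (u <= V + perp V)%MS.
Proof.
apply: submx_full; rewrite /row_full mxrank_disjoint_sum ?capmx_perp //.
by rewrite mxrank_ker mxrank_tr subnKC // rank_leq_col.
Qed.

Lemma perp_decomp V u :
  exists u1 u2, [/\ (u1 <= V)%MS, (u2 <= perp V)%MS & u = u1 + u2].
Proof.
exists (u *m proj_mx V (perp V)), (u *m proj_mx (perp V) V).
by rewrite !proj_mx_sub add_proj_mx ?capmx_perp ?sub_addmx_perp.
Qed.

Lemma dotxx_le_add_perp V (u1 u2 : vec) : (u1 <= V)%MS -> (u2 <= perp V)%MS ->
  dot u1 u1 <= dot (u1 + u2) (u1 + u2).
Proof.
move=> u1V u2P; rewrite dotDl !dotDr (dotC u1 u2) (dot_perp u2P u1V) addr0 add0r.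
by rewrite lerDl dotxx_ge0.
Qed.

Lemma sub_of_dot_perp S y :
  (forall w, (w <= perp S)%MS -> dot y w = 0) -> (y <= S)%MS.
Proof.
move=> y_orth; have [y1 [y2 [y1S y2P ey]]] := perp_decomp S y.
have := y_orth y2 y2P; rewrite ey dotDl (dotC y1) (dot_perp y2P y1S) add0r.
by move/dotxx_eq0 ->; rewrite addr0.
Qed.

Definition sqr_frobenius A : R := \sum_j \sum_k A k j ^+ 2.

Lemma sqr_frobenius_ge0 A : 0 <= sqr_frobenius A.
Proof. by apply: sumr_ge0 => j _; apply: sumr_ge0 => k _; exact: sqr_ge0. Qed.

Lemma dot_mulmx_le x A : dot (x *m A) (x *m A) <= dot x x * sqr_frobenius A.
Proof.
rewrite [leLHS]dotE mulr_sumr; apply: ler_sum => j _.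
pose c : vec := \row_k A k j.
have -> : (x *m A) 0 j * (x *m A) 0 j = dot x c ^+ 2.
  by rewrite expr2 dotE mxE; congr (_ * _); apply: eq_bigr => k _; rewrite mxE.
apply: (le_trans (sqr_dot_le x c)); rewrite ler_wpM2l ?dotxx_ge0 // dotE.
by under eq_bigr do rewrite mxE -expr2.
Qed.

Lemma enorm_mxapply_le A x : enorm (mxapply A x) <= opnorm A * enorm x.
Proof.
pose E := [set enorm (mxapply A y) | y in [set y : vec | enorm y <= 1]].
have E_ub : has_ubound E.
  exists (Num.sqrt (sqr_frobenius A^T)) => _ [y /= y_le1 <-].
  rewrite ler_sqrt ?sqr_frobenius_ge0 //; apply: (le_trans (dot_mulmx_le _ _)).
  rewrite -[leRHS]mul1r ler_wpM2r ?sqr_frobenius_ge0 // -sqr_enorm -(expr1n _ 2).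
  by rewrite lerXn2r ?nnegrE ?enorm_ge0.
have [->|x_neq0] := eqVneq x 0.
  by rewrite /mxapply mul0mx /enorm dot0l sqrtr0 mulr0.
have x_gt0 : 0 < enorm x.
  rewrite lt_def enorm_ge0 andbT; apply: contra x_neq0 => /eqP x0.
  by apply/eqP/dotxx_eq0; rewrite -sqr_enorm x0 expr0n.
have : enorm (mxapply A ((enorm x)^-1 *: x)) <= opnorm A.
  apply: ub_le_sup => //; exists ((enorm x)^-1 *: x) => //=.
  by rewrite enormZ ger0_norm ?invr_ge0 ?enorm_ge0 // mulVf // gt_eqF.
rewrite /mxapply -scalemxAl enormZ ger0_norm ?invr_ge0 ?enorm_ge0 //.
by rewrite mulrC -ler_pdivlMr ?invr_gt0 // invrK.
Qed.

Lemma opnorm_le A c : 0 <= c -> (forall x, enorm (mxapply A x) <= c * enorm x) ->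
  opnorm A <= c.
Proof.
move=> c_ge0 A_le; apply: ge_sup.
  by exists (enorm (mxapply A 0)), 0 => //=; rewrite /enorm dot0l sqrtr0 ler01.
move=> _ [x /= x_le1 <-]; apply: (le_trans (A_le x)).
by rewrite -[leRHS]mulr1 ler_wpM2l.
Qed.

Lemma unitmx_mul_tr r (B : 'M[R]_(r, n)) : row_free B -> B *m B^T \in unitmx.
Proof.
move=> B_free; rewrite -row_free_unit -kermx_eq0; apply/eqP/row_matrixP => i.
rewrite row0; set v := row i _.
have /sub_kermxP vBBt : (v <= kermx (B *m B^T))%MS by exact: row_sub.
have : dot (v *m B) (v *m B) = 0.
  by rewrite /dot trmx_mul mulmxA -(mulmxA v) vBBt mul0mx mxE.
by move/dotxx_eq0 => vB0; apply: (row_free_inj B_free); rewrite /= vB0 mul0mx.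
Qed.

(* For a full-rank factorisation A = F G, A^+ = G^T (G G^T)^-1 (F^T F)^-1 F^T. *)
Lemma is_MPinv_full_rank_factor r (F : 'M[R]_(n, r)) (G : 'M[R]_(r, n)) :
  row_free G -> row_free F^T -> exists X, is_MPinv (F *m G) X.
Proof.
move=> G_free Ft_free.
pose P := invmx (G *m G^T); pose Q := invmx (F^T *m F).
have GP : (G *m G^T) *m P = 1%:M by rewrite mulmxV // unitmx_mul_tr.
have QF : Q *m (F^T *m F) = 1%:M.
  by rewrite mulVmx //; have := unitmx_mul_tr Ft_free; rewrite trmxK.
have PT : P^T = P by rewrite /P trmx_inv trmx_mul trmxK.
have QT : Q^T = Q by rewrite /Q trmx_inv trmx_mul trmxK.
exists (G^T *m P *m Q *m F^T).
have AX : F *m G *m (G^T *m P *m Q *m F^T) = F *m Q *m F^T.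
  by rewrite !mulmxA -(mulmxA F G) -(mulmxA F) GP mulmx1.
have XA : (G^T *m P *m Q *m F^T) *m (F *m G) = G^T *m P *m G.
  by rewrite !mulmxA -(mulmxA _ F^T F) -(mulmxA _ Q) QF mulmx1.
split.
- by rewrite AX !mulmxA -(mulmxA _ F^T F) -(mulmxA F Q) QF mulmx1.
- by rewrite XA !mulmxA -(mulmxA _ G G^T) -(mulmxA (G^T *m P) (G *m G^T) P) GP mulmx1.
- by rewrite AX !trmx_mul trmxK QT mulmxA.
- by rewrite XA !trmx_mul trmxK PT mulmxA.
Qed.

Lemma MPinvP A : is_MPinv A (MPinv A).
Proof.
apply: (xgetPex 0); rewrite -(mulmx_base A).
apply: is_MPinv_full_rank_factor; first exact: row_base_free.
by rewrite -row_leq_rank mxrank_tr (eqP (col_base_full A)).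
Qed.

End Euclidean.

Section Borel.
Variables (R : realType) (n : nat).
Local Notation vec := 'rV[R]_n.
Local Notation Rn := (Rn R n).

Lemma continuous_measurable_Rn (f : vec -> R) :
  continuous f -> measurable_fun [set: Rn] f.
Proof.
move=> /continuousP f_cont; apply: (measurability _ (RGenOpens.measurableE R)).
move=> _ [_ [a [b ->] <-]]; rewrite setTI; apply: sub_sigma_algebra.
exact/f_cont/interval_open.
Qed.

Lemma coord_measurable i : measurable_fun [set: Rn] (fun x : Rn => (x : vec) 0 i).
Proof. by apply: continuous_measurable_Rn; exact: (@coord_continuous R 1 n 0 i). Qed.

Lemma continuous_sum (T : topologicalType) (U : normedModType R) I (s : seq I)
    (f : I -> T -> U) :
  (forall i, continuous (f i)) -> continuous (fun x => \sum_(i <- s) f i x).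
Proof.
move=> f_cont; elim: s => [|i s IHs].
  by under eq_fun do rewrite big_nil; exact: cst_continuous.
by under eq_fun do rewrite big_cons; move=> x; apply: cvgD; [exact: f_cont|exact: IHs].
Qed.

Lemma mulmx_continuous m p (A : 'M[R]_(m, p)) :
  continuous (fun u : 'rV[R]_m => u *m A).
Proof.
under eq_fun do rewrite mulmx_sum_row.
by apply: continuous_sum => k u; apply: continuousZr_tmp; exact: coord_continuous.
Qed.

Lemma mulmx_measurable (A : 'M[R]_n) :
  measurable_fun [set: Rn] (fun x : Rn => (x : vec) *m A : Rn).
Proof.
have /continuousP A_cont := @mulmx_continuous n n A.
apply: (@measurability _ _ Rn Rn _ _ (@open vec)) => //.
by move=> _ [B B_open <-]; rewrite setTI; apply: sub_sigma_algebra; exact: A_cont.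
Qed.

Lemma measurable_dot d (T : measurableType d) (a b : T -> Rn) :
  measurable_fun setT a -> measurable_fun setT b ->
  measurable_fun setT (fun t => dot (a t) (b t)).
Proof.
move=> a_meas b_meas; under eq_fun do rewrite dotE.
apply: measurable_sum => k; apply: measurable_funM.
  exact: measurableT_comp (coord_measurable k) a_meas.
exact: measurableT_comp (coord_measurable k) b_meas.
Qed.

Definition subspace_set (S : 'M[R]_n) : set Rn := [set x : Rn | ((x : vec) <= S)%MS].

Lemma measurable_subspace_set S : measurable (subspace_set S).
Proof.
pose xK (x : Rn) : Rn := (x : vec) *m cokermx S.
have -> : subspace_set S = (fun x => dot (xK x) (xK x)) @^-1` [set 0].
  apply/seteqP; split => x /=; rewrite /subspace_set /xK /= submxE.
    by move/eqP => ->; rewrite dot0l.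
  by move/dotxx_eq0 => ->.
rewrite -[X in measurable X]setTI.
by apply: measurable_dot => //; exact: mulmx_measurable.
Qed.

Lemma M2E (eta : set Rn -> \bar R) :
  M2 eta = (\int[eta]_x (dot (x : vec) (x : vec))%:E)%E.
Proof. by rewrite /M2; congr integral; apply/funext => x; rewrite sqr_enorm. Qed.

Lemma subspace_set_compl (eta : probability Rn R) S :
  eta (subspace_set S) = 1%E -> eta (~` subspace_set S) = 0%E.
Proof.
move=> eta_S; rewrite probability_setC ?eta_S ?subee //.
exact: measurable_subspace_set.
Qed.

End Borel.

Section RealIntegral.
Variables (d : measure_display) (T : measurableType d) (R : realType).
Variable m : {measure set T -> \bar R}.

Implicit Types f g : T -> R.

Definition Rintegrable (f : T -> R) := m.-integrable setT (EFin \o f).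

Lemma RintegrableZ (c : R) f : Rintegrable f -> Rintegrable (fun t => c * f t).
Proof.
by move/(integrableZl measurableT c); apply: eq_integrable => // t _ /=; rewrite EFinM.
Qed.

Lemma RintegrableD f g :
  Rintegrable f -> Rintegrable g -> Rintegrable (fun t => f t + g t).
Proof. by move=> f_int /(integrableD measurableT f_int); apply: eq_integrable. Qed.

Lemma RintegrableB f g :
  Rintegrable f -> Rintegrable g -> Rintegrable (fun t => f t - g t).
Proof. by move=> f_int /(integrableB measurableT f_int); apply: eq_integrable. Qed.

Lemma Rintegrable_sum I (s : seq I) (f : I -> T -> R) :
  (forall i, Rintegrable (f i)) -> Rintegrable (fun t => \sum_(i <- s) f i t).
Proof.
move=> f_int; elim: s => [|i s IHs].
  by move: (integrable0 m setT); apply: eq_integrable => // t _; rewrite /= big_nil.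
move: (RintegrableD (f_int i) IHs).
by apply: eq_integrable => // t _; rewrite /= big_cons.
Qed.

Lemma Rintegral_sum I (s : seq I) (f : I -> T -> R) :
  (forall i, Rintegrable (f i)) ->
  \int[m]_t (\sum_(i <- s) f i t) = \sum_(i <- s) \int[m]_t f i t.
Proof.
move=> f_int; elim: s => [|i s IHs].
  by under eq_Rintegral do rewrite big_nil; rewrite big_nil Rintegral_cst // mul0r.
under eq_Rintegral do rewrite big_cons.
rewrite big_cons RintegralD ?IHs //; first exact: f_int.
exact: Rintegrable_sum.
Qed.

Lemma Rintegrable_le f g : measurable_fun setT f -> (forall t, `|f t| <= g t) ->
  Rintegrable g -> Rintegrable f.
Proof.
move=> f_meas f_le; apply: le_integrable => //; first exact/measurable_EFinP.
by move=> t _ /=; rewrite lee_fin (le_trans (f_le t)) // ler_norm.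
Qed.

Lemma Rintegrable_ge0 f : measurable_fun setT f -> (forall t, 0 <= f t) ->
  (\int[m]_t (f t)%:E < +oo)%E -> Rintegrable f.
Proof.
move=> f_meas f_ge0 f_fin; apply/integrableP; split; first exact/measurable_EFinP.
by under eq_integral => t _ do rewrite /= ger0_norm ?f_ge0 //.
Qed.

Lemma EFin_Rintegral f : Rintegrable f -> (\int[m]_t (f t)%:E)%E = (\int[m]_t f t)%:E.
Proof. by move=> f_int; rewrite /Rintegral fineK // integrable_fin_num. Qed.

Lemma integral_eq_on (S : set T) f h : measurable S -> m (~` S) = 0%E ->
  measurable_fun setT f -> measurable_fun setT h -> {in S, f =1 h} ->
  (\int[m]_t (f t)%:E = \int[m]_t (h t)%:E)%E.
Proof.
move=> S_meas S_full f_meas h_meas fh; apply: ae_eq_integral => //.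
- exact/measurable_EFinP.
- exact/measurable_EFinP.
exists (~` S); split => //; first exact: measurableC.
by move=> t /= fh_neq St; apply: fh_neq => _; rewrite fh // inE.
Qed.

Lemma Rintegral_CauchySchwarz f g :
  Rintegrable (fun t => f t ^+ 2) -> Rintegrable (fun t => g t ^+ 2) ->
  Rintegrable (fun t => f t * g t) ->
  (\int[m]_t (f t * g t)) ^+ 2 <= \int[m]_t (f t ^+ 2) * \int[m]_t (g t ^+ 2).
Proof.
move=> f2_int g2_int fg_int.
apply: discriminant_le; first by apply: Rintegral_ge0 => t _; exact: sqr_ge0.
move=> s; have : 0 <= \int[m]_t ((f t - s * g t) ^+ 2).
  by apply: Rintegral_ge0 => t _; exact: sqr_ge0.
have -> : (fun t => (f t - s * g t) ^+ 2) =
    (fun t => (f t ^+ 2 - (2 * s) * (f t * g t)) + s ^+ 2 * g t ^+ 2).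
  by apply/funext => t; ring.
rewrite RintegralD ?RintegralB ?RintegralZl ?mulrA //.
all: by [apply: RintegrableZ | apply: RintegrableB => //; exact: RintegrableZ].
Qed.

End RealIntegral.

Section SecondMoment.
Variables (d : measure_display) (T : measurableType d) (R : realType).
Variables (m : {measure set T -> \bar R}) (n : nat).
Local Notation vec := 'rV[R]_n.
Local Notation Rn := (Rn R n).

Definition square_integrable (a : T -> Rn) :=
  measurable_fun setT a /\ (\int[m]_t (dot (a t) (a t))%:E < +oo)%E.

Lemma Rintegrable_dotxx a :
  square_integrable a -> Rintegrable m (fun t => dot (a t) (a t)).
Proof.
move=> [a_meas a_fin]; apply: Rintegrable_ge0 => // [|t]; last exact: dotxx_ge0.
exact: measurable_dot.
Qed.

Lemma Rintegrable_coordM a b i j : square_integrable a -> square_integrable b ->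
  Rintegrable m (fun t => (a t : vec) 0 i * (b t : vec) 0 j).
Proof.
move=> a_L2 b_L2.
apply: (@Rintegrable_le _ _ _ _ _ (fun t => dot (a t) (a t) + dot (b t) (b t))).
- apply: measurable_funM.
    exact: measurableT_comp (coord_measurable i) a_L2.1.
  exact: measurableT_comp (coord_measurable j) b_L2.1.
- move=> t; set x := (a t : vec) 0 i; set y := (b t : vec) 0 j.
  apply: (@le_trans _ _ (x ^+ 2 + y ^+ 2)); last by rewrite lerD ?sqr_coord_le_dot.
  rewrite normrM -[x ^+ 2]real_normK ?num_real // -[y ^+ 2]real_normK ?num_real //.
  have := sqr_ge0 (`|x| - `|y|); nra.
- by apply: RintegrableD; exact: Rintegrable_dotxx.
Qed.

Lemma Rintegrable_dotM a b v w : square_integrable a -> square_integrable b ->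
  Rintegrable m (fun t => dot v (a t) * dot w (b t)).
Proof.
move=> a_L2 b_L2; under [X in Rintegrable _ X]eq_fun do rewrite dotM_dotE.
apply: Rintegrable_sum => i; apply: Rintegrable_sum => j.
by apply: RintegrableZ; exact: Rintegrable_coordM.
Qed.

Lemma mxint_bilinear a b v w : square_integrable a -> square_integrable b ->
  (v *m mxint m (fun t => (a t : vec)^T *m (b t : vec)) *m w^T) 0 0 =
    \int[m]_t (dot v (a t) * dot w (b t)).
Proof.
move=> a_L2 b_L2; under eq_Rintegral do rewrite dotM_dotE.
have coordM_int i j := Rintegrable_coordM i j a_L2 b_L2.
rewrite Rintegral_sum => [|i]; last first.
  by apply: Rintegrable_sum => j; exact: RintegrableZ.
rewrite mxE; under eq_bigr do rewrite !mxE mulr_suml.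
rewrite exchange_big; apply: eq_bigr => i _.
rewrite Rintegral_sum => [|j]; last exact: RintegrableZ.
apply: eq_bigr => j _; rewrite RintegralZl //; last exact: coordM_int.
rewrite mulrAC mxE.
by under eq_Rintegral do rewrite !mxE big_ord1 !mxE.
Qed.

Lemma square_integrable_mulmx (a : T -> Rn) (A : 'M[R]_n) : square_integrable a ->
  square_integrable (fun t => (a t : vec) *m A : Rn).
Proof.
move=> a_L2; have a_meas := a_L2.1.
have aA_meas : measurable_fun setT (fun t => (a t : vec) *m A : Rn).
  exact: measurableT_comp (mulmx_measurable A) a_meas.
split => //; apply: le_lt_trans
  (_ : _ <= \int[m]_t ((sqr_frobenius A * dot (a t) (a t))%:E))%E _.
  apply: ge0_le_integral => //.
  - by move=> t _; rewrite lee_fin dotxx_ge0.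
  - by apply/measurable_EFinP; exact: measurable_dot.
  - by apply/measurable_EFinP/measurable_funM => //; exact: measurable_dot.
  - by move=> t _; rewrite lee_fin mulrC dot_mulmx_le.
rewrite (_ : (fun t => _) = fun t => (sqr_frobenius A)%:E * (dot (a t) (a t))%:E)%E.
  rewrite ge0_integralZl_EFin ?lee_fin ?sqr_frobenius_ge0 //.
  - by rewrite lte_mul_pinfty ?lee_fin ?sqr_frobenius_ge0 //; exact: a_L2.2.
  - by move=> t _; rewrite lee_fin dotxx_ge0.
  - exact/measurable_EFinP/measurable_dot.
by apply/funext => t; rewrite EFinM.
Qed.

End SecondMoment.

Lemma square_integrable_id (R : realType) n (eta : probability (Rn R n) R) :
  (M2 eta < +oo)%E -> square_integrable eta id.
Proof. by rewrite M2E. Qed.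

Lemma integral_marginal d1 d2 (X : measurableType d1) (Y : measurableType d2)
    (R : realType) (g : {measure set X -> \bar R}) (mu : {measure set Y -> \bar R})
    (phi : X -> Y) (h : Y -> R) :
  measurable_fun setT phi -> (forall A, measurable A -> g (phi @^-1` A) = mu A) ->
  measurable_fun setT h -> (forall y, 0 <= h y) ->
  (\int[g]_x (h (phi x))%:E = \int[mu]_y (h y)%:E)%E.
Proof.
move=> phi_meas g_phi h_meas h_ge0.
have := ge0_integral_pushforward phi_meas g measurableT (f := EFin \o h).
rewrite preimage_setT => <- //.
- by apply: eq_measure_integral => A A_meas _; exact: g_phi.
- exact/measurable_EFinP.
- by move=> y _; rewrite lee_fin.
Qed.

Section Marginal.
Variables (R : realType) (n : nat) (d : measure_display) (X : measurableType d).
Local Notation vec := 'rV[R]_n.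
Local Notation Rn := (Rn R n).
Variables (g : {measure set X -> \bar R}) (eta : probability Rn R) (phi : X -> Rn).
Hypothesis g_phi : forall A, measurable A -> g (phi @^-1` A) = eta A.

Lemma square_integrable_marginal : measurable_fun setT phi -> (M2 eta < +oo)%E ->
  square_integrable g phi.
Proof.
move=> phi_meas; rewrite M2E => eta_fin; split => //.
rewrite (integral_marginal (h := fun x : Rn => dot (x : vec) (x : vec)) 
  phi_meas g_phi) //.
- exact: measurable_dot.
- by move=> x; exact: dotxx_ge0.
Qed.

Lemma marginal_subspace_set_compl S : eta (subspace_set S) = 1%E ->
  g (~` (phi @^-1` subspace_set S)) = 0%E.
Proof.
move=> eta_S; rewrite preimage_setC g_phi; first exact: subspace_set_compl.
by apply: measurableC; exact: measurable_subspace_set.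
Qed.

End Marginal.

Section ObliqueDuality.
Variables (R : realType) (n : nat).
Local Notation vec := 'rV[R]_n.
Local Notation Rn := (Rn R n).
Variables (W V : 'M[R]_n) (mu nu : probability Rn R).
Hypothesis WV_full : (W + perp V == 1%:M)%MS.
Hypothesis WV_direct : mxdirect (W + perp V).
Hypothesis mu_W : mu (subspace_set W) = 1%E.
Hypothesis mu_fin : (M2 mu < +oo)%E.
Hypothesis nu_V : nu (subspace_set V) = 1%E.
Hypothesis nu_fin : (M2 nu < +oo)%E.

Local Notation P := (proj_mx W (perp V)).
Local Notation S := (frame_op nu).

Lemma capmx_W_perp : (W :&: perp V)%MS = 0.
Proof. exact/mxdirect_addsP. Qed.

Lemma sub_proj_perp (x : vec) : (x - x *m P <= perp V)%MS.
Proof.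
have x_WV : (x <= W + perp V)%MS by rewrite (eqmxP WV_full) submx1.
rewrite -{1}(add_proj_mx capmx_W_perp x_WV) addrC addKr; exact: proj_mx_sub.
Qed.

Lemma integral_nu_eq_on_V (f h : Rn -> R) :
  measurable_fun setT f -> measurable_fun setT h -> {in subspace_set V, f =1 h} ->
  (\int[nu]_z (f z)%:E = \int[nu]_z (h z)%:E)%E.
Proof.
apply: integral_eq_on; first exact: measurable_subspace_set.
exact: subspace_set_compl.
Qed.

Lemma Rintegrable_nu_dotM (v w : vec) : Rintegrable nu (fun z : Rn => dot v z * dot w z).
Proof. by apply: Rintegrable_dotM; exact: square_integrable_id. Qed.

Lemma Rintegrable_nu_sqr_dot (v : vec) : Rintegrable nu (fun z : Rn => dot v z ^+ 2).
Proof.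
by under [X in Rintegrable _ X]eq_fun do rewrite expr2; exact: Rintegrable_nu_dotM.
Qed.

Lemma frame_opE (v w : vec) : (v *m S *m w^T) 0 0 = \int[nu]_z (dot v z * dot w z).
Proof. by apply: mxint_bilinear; exact: square_integrable_id. Qed.

Lemma frame_op_tr : S^T = S.
Proof.
apply/matrixP => i j; rewrite !mxE; apply: eq_Rintegral => z _.
by rewrite !mxE !big_ord1 !mxE mulrC.
Qed.

Lemma dot_frame_op_perp (v w : vec) : (w <= perp V)%MS -> dot (v *m S) w = 0.
Proof.
move=> wP; rewrite /dot frame_opE /Rintegral.
rewrite (integral_nu_eq_on_V (h := fun=> 0)) ?integral0 //.
- by apply: measurable_funM; exact: measurable_dot.
- by move=> z /[!inE] zV; rewrite (dot_perp wP zV) mulr0.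
Qed.

Lemma frame_op_sub (v : vec) : (v *m S <= V)%MS.
Proof. by apply: sub_of_dot_perp => w; exact: dot_frame_op_perp. Qed.

Lemma frame_op_perp (v : vec) : (v <= perp V)%MS -> v *m S = 0.
Proof.
move=> vP; apply: dot_inj => w; rewrite dot0l /dot frame_opE.
by under eq_Rintegral do rewrite mulrC; rewrite -frame_opE; exact: dot_frame_op_perp.
Qed.

Lemma integral_sqr_dot_frame_op (v : vec) :
  (\int[nu]_z (dot v z ^+ 2)%:E)%E = ((v *m S *m v^T) 0 0)%:E.
Proof.
rewrite EFin_Rintegral ?frame_opE; last exact: Rintegrable_nu_sqr_dot.
by under eq_Rintegral do rewrite expr2.
Qed.

Section Coupled.
Variable g : probability (Rn * Rn)%type R.
Hypothesis g_coupling : coupling mu nu g.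
Local Notation C := (cross_op g).

Lemma cross_opE (v w : vec) :
  (v *m C *m w^T) 0 0 = \int[g]_p (dot v (p.1 : vec) * dot w (p.2 : vec)).
Proof.
apply: mxint_bilinear.
  exact: square_integrable_marginal g_coupling.1 measurable_fst mu_fin.
exact: square_integrable_marginal g_coupling.2 measurable_snd nu_fin.
Qed.

Lemma recon_mulmx (f : vec) : recon g f = f *m C^T.
Proof.
apply/rowP => i; rewrite mxE.
transitivity (\int[g]_p (dot (delta_mx 0 i) (p.1 : vec) * dot f (p.2 : vec))).
  by apply: eq_Rintegral => p _; rewrite dot_delta dotC.
rewrite -cross_opE -rowE !mxE; apply: eq_bigr => j _; by rewrite !mxE mulrC.
Qed.

Lemma cross_op_sub (x : vec) : (x *m C^T <= W)%MS.
Proof.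
apply: sub_of_dot_perp => w wP; rewrite dotC dot_mulmx trmxK /dot cross_opE /Rintegral.
have fst_W : measurable (fst @^-1` subspace_set W : set (Rn * Rn)).
  rewrite -[X in measurable X]setTI; apply: measurable_fst => //.
  exact: measurable_subspace_set.
rewrite (integral_eq_on (h := fun=> 0) fst_W) ?integral0 //.
- exact: marginal_subspace_set_compl g_coupling.1 _ mu_W.
- by apply: measurable_funM; apply: measurable_dot.
- by move=> p /[!inE] pW; rewrite (dot_perp wP pW) mul0r.
Qed.

Lemma integral_recon_error (f : vec) :
  (\int[nu]_z (dot (f - recon g f) z ^+ 2)%:E =
   \int[nu]_z (dot (f *m (P - C^T)) z ^+ 2)%:E)%E.
Proof.
apply: integral_nu_eq_on_V => [||z /[!inE] zV]; try exact/measurable_funX/measurable_dot.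
rewrite recon_mulmx.
have -> : f - f *m C^T = (f - f *m P) + f *m (P - C^T) by rewrite mulmxBr addrA subrK.
by rewrite dotDl (dot_perp (sub_proj_perp f) zV) add0r.
Qed.

End Coupled.

Lemma mxapply_sub_oblique_proj (A : 'M[R]_n) (f : vec) :
  mxapply (A - oblique_proj W V) f = - (f *m (P - A^T)).
Proof. by rewrite /mxapply /oblique_proj linearB /= trmxK !mulmxBr opprB. Qed.

Lemma upper_frame_bound_sqr_dot (B : R) (u : vec) : 0 <= B -> upper_frame_bound V nu B ->
  (\int[nu]_z (dot u z ^+ 2)%:E <= (B * enorm u ^+ 2)%:E)%E.
Proof.
move=> B_ge0 B_ub; have [u1 [u2 [u1V u2P eu]]] := perp_decomp V u.
rewrite (integral_nu_eq_on_V (h := fun z => dot u1 z ^+ 2)); first last.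
- by move=> z /[!inE] zV; rewrite eu dotDl (dot_perp u2P zV) addr0.
- exact/measurable_funX/measurable_dot.
- exact/measurable_funX/measurable_dot.
apply: le_trans (B_ub u1 u1V) _; rewrite lee_fin ler_wpM2l // !sqr_enorm eu.
exact: dotxx_le_add_perp u1V u2P.
Qed.

Lemma approx_dual_consistent_recon (eps B : R) : 0 < B -> upper_frame_bound V nu B ->
  approx_dual W V mu nu eps -> consistent_recon mu nu (Num.sqrt B * eps).
Proof.
move=> B_gt0 B_ub [eps_ge0 [g [g_coupling C_near]]].
split; first by rewrite mulr_ge0 ?sqrtr_ge0.
exists g; split => // f; rewrite integral_recon_error //.
apply: le_trans (upper_frame_bound_sqr_dot _ (ltW B_gt0) B_ub) _.
have u_le : enorm (f *m (P - (cross_op g)^T)) <= eps * enorm f.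
  rewrite -enormN -mxapply_sub_oblique_proj (le_trans (enorm_mxapply_le _ _)) //.
  by rewrite ler_wpM2r ?enorm_ge0.
rewrite lee_fin -mulrA exprMn (sqr_sqrtr (ltW B_gt0)) ler_wpM2l ?(ltW B_gt0) //.
rewrite lerXn2r //.
all: by rewrite nnegrE ?mulr_ge0 ?enorm_ge0.
Qed.

Lemma M2_pushforward_mxapply (A : 'M[R]_n) :
  fine (M2 (pushforward nu (mxapply A : Rn -> Rn))) =
    \int[nu]_z dot ((z : vec) *m A^T) ((z : vec) *m A^T).
Proof.
rewrite M2E ge0_integral_pushforward //.
- exact: mulmx_measurable A^T.
- by apply/measurable_EFinP; exact: measurable_dot.
- by move=> y _; rewrite lee_fin dotxx_ge0.
Qed.

Hypothesis nu_lower : exists2 A : R, 0 < A & forall x : vec, (x <= V)%MS ->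
  ((A * enorm x ^+ 2)%:E <= \int[nu]_z (dot x z ^+ 2)%:E)%E.

Lemma frame_op_inj (v : vec) : (v <= V)%MS -> v *m S = 0 -> v = 0.
Proof.
move=> vV vS0; have [A A_gt0 A_low] := nu_lower.
have := A_low v vV; rewrite integral_sqr_dot_frame_op vS0 !mul0mx mxE lee_fin sqr_enorm.
rewrite pmulr_rle0 // => v_le0; apply: dotxx_eq0.
by apply/eqP; rewrite eq_le v_le0 dotxx_ge0.
Qed.

Local Notation X := (MPinv S).

Lemma frame_op_pinvK (v : vec) : (v <= V)%MS -> v *m S *m X^T = v.
Proof.
move=> vV; have [SXS _ _ XS_sym] := MPinvP S.
have SXt : S *m X^T = X *m S by rewrite -XS_sym trmx_mul frame_op_tr.
have SXtS : S *m X^T *m S = S.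
  by have := congr1 trmx SXS; rewrite !trmx_mul !frame_op_tr mulmxA.
apply/eqP; rewrite -subr_eq0; apply/eqP/frame_op_inj.
  by rewrite addmx_sub ?eqmx_opp // -mulmxA SXt mulmxA frame_op_sub.
by rewrite mulmxBl -!mulmxA (mulmxA S) SXtS subrr.
Qed.

Lemma frame_op_pinv_proj (u : vec) : (u <= W)%MS -> u *m S *m X^T *m P = u.
Proof.
move=> uW; have [u1 [u2 [u1V u2P eu]]] := perp_decomp V u.
rewrite {1}eu mulmxDl (frame_op_perp u2P) addr0 (frame_op_pinvK u1V).
have u2P0 : u2 *m P = 0 by rewrite proj_mx_0 // capmx_W_perp.
by rewrite -[RHS](proj_mx_id capmx_W_perp uW) eu mulmxDl u2P0 addr0.
Qed.

Local Notation Q := (X^T *m P).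

Lemma dotxx_le_pinv_moment (u : vec) : (u <= W)%MS ->
  dot u u <= \int[nu]_z dot ((z : vec) *m Q) ((z : vec) *m Q) * \int[nu]_z (dot u z ^+ 2).
Proof.
move=> uW; set Mq := \int[nu]_z _; set Iu := \int[nu]_z _.
have zQ_int : Rintegrable nu (fun z : Rn => dot ((z : vec) *m Q) ((z : vec) *m Q)).
  exact/Rintegrable_dotxx/square_integrable_mulmx/square_integrable_id.
have Iu_ge0 : 0 <= Iu by apply: Rintegral_ge0 => z _; exact: sqr_ge0.
have Mq_ge0 : 0 <= Mq by apply: Rintegral_ge0 => z _; exact: dotxx_ge0.
have uu_eq : dot u u = \int[nu]_z (dot u z * dot (u *m Q^T) z).
  by rewrite -frame_opE trmx_mul trmxK !(mulmxA (u *m S)) frame_op_pinv_proj.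
have uQ_le : \int[nu]_z (dot (u *m Q^T) z ^+ 2) <= dot u u * Mq.
  rewrite -RintegralZl //; apply: le_Rintegral => //.
  - exact: Rintegrable_nu_sqr_dot.
  - exact: RintegrableZ.
  - by move=> z _; rewrite -dot_mulmx; exact: sqr_dot_le.
have uu_le : dot u u ^+ 2 <= Iu * (dot u u * Mq).
  apply: le_trans (ler_wpM2l Iu_ge0 uQ_le); rewrite {1}uu_eq.
  apply: Rintegral_CauchySchwarz; [exact: Rintegrable_nu_sqr_dot..|].
  exact: Rintegrable_nu_dotM.
have [->|uu_neq0] := eqVneq (dot u u) 0; first exact: mulr_ge0.
have uu_gt0 : 0 < dot u u by rewrite lt_def uu_neq0 dotxx_ge0.
by move: uu_le; rewrite expr2 mulrCA ler_pM2l // mulrC.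
Qed.

Lemma consistent_recon_approx_dual (alpha : R) : consistent_recon mu nu alpha ->
  approx_dual W V mu nu (alpha * Num.sqrt (fine (M2 (pushforward nu
    (mxapply (oblique_proj W V *m X) : Rn -> Rn))))).
Proof.
move=> [alpha_ge0 [g [g_coupling recon_le]]].
rewrite M2_pushforward_mxapply.
have -> : (oblique_proj W V *m X)^T = Q by rewrite trmx_mul trmxK.
set Mq := \int[nu]_z _.
have Mq_ge0 : 0 <= Mq by apply: Rintegral_ge0 => z _; exact: dotxx_ge0.
split; first by rewrite mulr_ge0 ?sqrtr_ge0.
exists g; split => //; apply: opnorm_le; first by rewrite mulr_ge0 ?sqrtr_ge0.
move=> x; rewrite mxapply_sub_oblique_proj enormN; set u := x *m _.
have uW : (u <= W)%MS.
  by rewrite /u mulmxBr addmx_sub ?eqmx_opp ?proj_mx_sub ?cross_op_sub.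
have Iu_le : \int[nu]_z (dot u z ^+ 2) <= (alpha * enorm x) ^+ 2.
  rewrite -lee_fin -EFin_Rintegral ?Rintegrable_nu_sqr_dot //.
  by rewrite -integral_recon_error //; exact: recon_le.
rewrite -(@ler_pXn2r _ 2) // ?nnegrE ?enorm_ge0 ?mulr_ge0 ?sqrtr_ge0 //.
have -> : (alpha * Num.sqrt Mq * enorm x) ^+ 2 = Mq * (alpha * enorm x) ^+ 2.
  by rewrite !exprMn sqr_sqrtr //; ring.
by rewrite sqr_enorm (le_trans (dotxx_le_pinv_moment uW)) // ler_wpM2l.
Qed.

End ObliqueDuality.

Unset Implicit Arguments.

Theorem proposition6p3 (R : realType) (n : nat) (W V : 'M[R]_n)
    (mu nu : probability (Rn R n) R) :
  (W + perp V == 1%:M)%MS -> mxdirect (W + perp V) ->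
  prob_frame W mu -> prob_frame V nu ->
  (forall eps B : R, 0 < B -> upper_frame_bound V nu B ->
     approx_dual W V mu nu eps -> consistent_recon mu nu (Num.sqrt B * eps)) /\
  (forall alpha : R, consistent_recon mu nu alpha ->
     approx_dual W V mu nu
       (alpha * Num.sqrt (fine (M2 (pushforward nu
          (mxapply (oblique_proj W V *m MPinv (frame_op nu)) : Rn R n -> Rn R n)))))).
Proof.
move=> WV_full WV_direct [_ [_ [[mu_W mu_fin] _ _ _]]].
move=> [A [B [[nu_V nu_fin] A_gt0 _ nu_bounds]]].
split=> [eps B'|alpha]; first exact: approx_dual_consistent_recon.
apply: consistent_recon_approx_dual => //.
by exists A => // x xV; exact: (nu_bounds x xV).1.
Qed.
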